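(* Let $p\in(0,1)$, $x>2$, and let $(\xi_n)_{n\geq1}$ be i.i.d. with $\mathbf{P}(\xi_1=1)=p=1-\mathbf{P}(\xi_1=-1)$. Set $W_0:=x$, $B_1:=1$, $W_n:=W_{n-1}+\xi_nB_n$, $B_{n+1}:=B_n2^{\xi_n}$ for $n\geq1$, $f(x,p):=\mathbf{P}(W_n\leq0\text{ for some }n)$, $S_0:=0$, $S_n:=\sum_{i=1}^n\xi_i$, and $$S:=\sum_{n=1}^\infty\mathbf{1}_{\{\xi_n=1\}}2^{S_{n-1}}\in[0,\infty].$$ Then $f(x,p)=\mathbf{P}(S>x-2)$. *)

From HB Require Import structures.
From mathcomp Require Import all_boot all_order all_algebra.
From mathcomp Require Import all_classical all_reals all_analysis.
Set Implicit Arguments. Unset Strict Implicit. Unset Printing Implicit Defensive.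
Import Order.TTheory GRing.Theory Num.Theory.
Local Open Scope classical_set_scope.
Local Open Scope ring_scope.

Section Defs.
Context (d : measure_display) (T : measurableType d) (R : realType).

(* Mutual independence of the sequence (X_n)_{n>=1}: for every n and all
   Borel sets A_1..A_n, P(X_1 in A_1, ..., X_n in A_n) = prod P(X_i in A_i).
   (Taking A_i = setT this covers every finite subfamily.) *)
Definition indep_seq (P : probability T R) (X : nat -> T -> R) : Prop :=
  forall (n : nat) (A : nat -> set R), (forall i, measurable (A i)) ->
    P (\big[setI/setT]_(1 <= i < n.+1) (X i @^-1` A i)) =
    (\prod_(1 <= i < n.+1) P (X i @^-1` A i))%E.

(* B_1 = 1, B_{n+1} = B_n 2^{xi_n} (B_0 is an unused dummy value 1). *)
Fixpoint bet (xi : nat -> T -> R) (n : nat) (t : T) : R :=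
  match n with
  | 0 => 1
  | m.+1 => match m with
            | 0 => 1
            | _ => bet xi m t * (2 `^ (xi m t))
            end
  end.

Fixpoint wealth (x : R) (xi : nat -> T -> R) (n : nat) (t : T) : R :=
  match n with
  | 0 => x
  | m.+1 => wealth x xi m t + xi m.+1 t * bet xi m.+1 t
  end.

Definition psum (xi : nat -> T -> R) (n : nat) (t : T) : R :=
  \sum_(1 <= i < n.+1) xi i t.

Definition Ssum (xi : nat -> T -> R) (t : T) : \bar R :=
  (\sum_(1 <= n <oo) ((if xi n t == 1 then 1 else 0) * 2 `^ (psum xi n.-1 t))%:E)%E.

End Defs.

From HB Require Import structures.
From mathcomp Require Import all_boot all_order all_algebra.
From mathcomp Require Import all_classical all_reals all_analysis.
From mathcomp Require Import measurable_realfun zify ring lra.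
Set Implicit Arguments.
Unset Strict Implicit.
Unset Printing Implicit Defensive.
Import Order.TTheory GRing.Theory Num.Theory.
Local Open Scope classical_set_scope.
Local Open Scope ring_scope.

(* Let A_n ([Spsum]) be the n-th partial sum of S and recall B_(n+1) = 2^(S_n).
   As long as every xi_i is +-1, W_n = x - 2 - A_n + 2 B_(n+1): a win raises
   W and A by B_n and doubles B, a loss lowers W by B_n and halves B.  Hence
   ruin forces A_n > x - 2, so S > x - 2.  Conversely the pattern (+1, -1, -1)
   on steps m+1, m+2, m+3 gives W_(m+3) = x - 2 - A_m, so once A_n > x - 2 any
   later occurrence of the pattern ruins the gambler.  Almost surely every xi_i
   is +-1 and the pattern occurs in infinitely many of the blocks
   {3k+1, 3k+2, 3k+3}, which are independent and each carry it with
   probability p(1-p)^2; so the two events differ by a null set. *)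

Lemma measure_ae_eq d (T : measurableType d) (R : realType)
    (mu : {measure set T -> \bar R}) (A B : set T) :
  measurable A -> measurable B -> (\forall t \ae mu, A t <-> B t) -> mu A = mu B.
Proof.
move=> mA mB [N [mN muN0 NAB]].
have AB t : ~ N t -> (A t <-> B t) by move=> Nt; apply: contrapT => /NAB.
have AB_off_N : A `\` N = B `\` N.
  by apply/seteqP; split=> t [Xt Nt]; split=> //; apply/(AB t Nt).
have null_in_N X : measurable X -> mu (X `&` N) = 0%E.
  by move=> mX; apply: subset_measure0 muN0 => //; apply: measurableI.
by rewrite (measureDI mu mA mN) (measureDI mu mB mN) /= AB_off_N !null_in_N.
Qed.

Lemma lee0_geometric (R : realType) (e : \bar R) (r : R) :
  `|r| < 1 -> (forall N, (e <= (r ^+ N)%:E)%E) -> (e <= 0)%E.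
Proof.
move=> r_lt1 e_le; have geo0 : (r ^+ N)%:E @[N --> \oo] --> (0 : \bar R).
  by apply: cvg_EFin; [exact: nearW | exact: cvg_expr].
rewrite -(cvg_lim _ geo0) //; apply: lime_ge; [exact: cvgP geo0 | exact: nearW].
Qed.

Definition pattern d (T : measurableType d) (R : realType) (xi : nat -> T -> R)
    (m : nat) : set T :=
  [set t | [/\ xi m.+1 t = 1, xi m.+2 t = -1 & xi m.+3 t = -1]].

Section trajectory.
Context d (T : measurableType d) (R : realType) (xi : nat -> T -> R) (t : T).

Definition Sterm (n : nat) : R :=
  (if xi n t == 1 then 1 else 0) * 2 `^ psum xi n.-1 t.

Definition Spsum (n : nat) : R := \sum_(1 <= i < n.+1) Sterm i.

Lemma wealthS x n :
  wealth x xi n.+1 t = wealth x xi n t + xi n.+1 t * bet xi n.+1 t.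
Proof. by []. Qed.

Lemma betS n : bet xi n.+2 t = bet xi n.+1 t * 2 `^ xi n.+1 t.
Proof. by []. Qed.

Lemma psumS n : psum xi n.+1 t = psum xi n t + xi n.+1 t.
Proof. by rewrite /psum big_nat_recr. Qed.

Lemma bet_psum n : bet xi n.+1 t = 2 `^ psum xi n t.
Proof.
elim: n => [|n IH]; first by rewrite /psum big_geq // powRr0.
by rewrite betS IH psumS powRD // pnatr_eq0 implybT.
Qed.

Lemma Sterm_ge0 n : 0 <= Sterm n.
Proof. by rewrite /Sterm; case: ifP; rewrite ?mul0r // mul1r powR_ge0. Qed.

Lemma SpsumS n : Spsum n.+1 = Spsum n + Sterm n.+1.
Proof. by rewrite /Spsum big_nat_recr. Qed.

Lemma le_Spsum : {homo Spsum : m n / (m <= n)%N >-> m <= n}.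
Proof.
move=> m n mn; rewrite /Spsum (big_cat_nat _ (_ : m.+1 <= n.+1)%N) //=.
by rewrite lerDl sumr_ge0 // => i _; exact: Sterm_ge0.
Qed.

Lemma sum_Sterm m : (\sum_(1 <= i < m) (Sterm i)%:E)%E = (Spsum m.-1)%:E.
Proof. by case: m => [|m]; rewrite sumEFin // big_geq. Qed.

Lemma Spsum_le_Ssum n : ((Spsum n)%:E <= Ssum xi t)%E.
Proof.
rewrite /Spsum -sumEFin; apply: nneseries_lim_ge => i _ _.
by rewrite lee_fin Sterm_ge0.
Qed.

Lemma Ssum_gtP c : (c%:E < Ssum xi t)%E <-> exists n, c < Spsum n.
Proof.
split=> [cS|[n cn]].
  2: by apply: lt_le_trans (Spsum_le_Ssum n); rewrite lte_fin.
apply: contrapT => /forallNP Spsum_le; move: cS; apply/negP; rewrite -leNgt.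
apply: lime_le.
  by apply: is_cvg_nneseries => i _ _; rewrite lee_fin Sterm_ge0.
by apply: nearW => m; rewrite sum_Sterm lee_fin leNgt; apply/negP.
Qed.

Hypothesis xi_sign : forall i, (0 < i)%N -> xi i t = 1 \/ xi i t = -1.

Lemma wealthE x n : wealth x xi n t = x - 2 - Spsum n + 2 * bet xi n.+1 t.
Proof.
elim: n => [|n IH]; first by rewrite /Spsum big_geq //=; ring.
rewrite wealthS IH SpsumS /Sterm -bet_psum betS.
have [->|->] := xi_sign (ltn0Sn n).
  by rewrite eqxx powRr1 //; ring.
rewrite (_ : -1 == 1 = false) ?powRN ?powRr1 //; last by apply/negbTE; lra.
by field.
Qed.

Lemma wealth_pattern x m :
  pattern xi m t -> wealth x xi m.+3 t = x - 2 - Spsum m.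
Proof.
case=> e1 e2 e3; rewrite !wealthS wealthE !betS.
by rewrite e1 e2 e3 powRN powRr1 //; field.
Qed.

Lemma ruin_iff_Ssum_gt x : (forall K, exists2 m, (K <= m)%N & pattern xi m t) ->
  (exists n, wealth x xi n t <= 0) <-> ((x - 2)%:E < Ssum xi t)%E.
Proof.
move=> pattern_io; rewrite Ssum_gtP; split=> [[n ruin]|[n Sn]].
  exists n; move: ruin; rewrite wealthE bet_psum.
  by have := @powR_gt0 _ 2 (psum xi n t) (ltr0Sn _ 1); lra.
have [m nm pat_m] := pattern_io n; exists m.+3.
by rewrite wealth_pattern //; have := le_Spsum nm; lra.
Qed.

End trajectory.

Section measurability.
Context d (T : measurableType d) (R : realType) (xi : nat -> T -> R).
Hypothesis xi_meas : forall n, (0 < n)%N -> measurable_fun setT (xi n).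

Lemma measurable_psum n : measurable_fun setT (psum xi n).
Proof.
elim: n => [|n IH].
  rewrite (_ : psum xi 0 = cst 0) //.
  by apply/funext => t; rewrite /psum big_geq.
rewrite (_ : psum xi n.+1 = psum xi n \+ xi n.+1).
  by apply: measurable_funD IH _; exact: xi_meas.
by apply/funext => t; rewrite psumS.
Qed.

Lemma measurable_bet n : measurable_fun setT (bet xi n.+1).
Proof.
rewrite (_ : bet xi n.+1 = powR 2 \o psum xi n); last first.
  by apply/funext => t; rewrite bet_psum.
exact: measurableT_comp (measurable_powRr _) (measurable_psum n).
Qed.

Lemma measurable_wealth x n : measurable_fun setT (wealth x xi n).
Proof.
elim: n => [|n IH]; first exact: measurable_cst.
rewrite (_ : wealth x xi n.+1 = wealth x xi n \+ xi n.+1 \* bet xi n.+1) //.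
apply: measurable_funD IH (measurable_funM _ (measurable_bet n)).
exact: xi_meas.
Qed.

Lemma measurable_Sterm n : measurable_fun setT (fun t => Sterm xi t n.+1).
Proof.
apply: measurable_funM.
  apply: measurable_fun_ifT; rewrite ?measurable_cst //.
  exact: measurable_fun_eqr (xi_meas _) (measurable_cst _).
exact: measurableT_comp (measurable_powRr _) (measurable_psum n).
Qed.

Lemma measurable_Spsum n : measurable_fun setT (fun t => Spsum xi t n).
Proof.
elim: n => [|n IH].
  rewrite (_ : (fun t => _) = cst 0) //.
  by apply/funext => t; rewrite /Spsum big_geq.
have -> : (fun t => Spsum xi t n.+1) =
    (fun t => Spsum xi t n) \+ (fun t => Sterm xi t n.+1).
  by apply/funext => t; rewrite SpsumS.
exact: measurable_funD IH (measurable_Sterm n).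
Qed.

Lemma measurable_ruin x : measurable [set t | exists n, wealth x xi n t <= 0].
Proof.
rewrite (_ : [set t | _] = \bigcup_n (wealth x xi n @^-1` `]-oo, 0]));
  last by apply/seteqP; split=> t [n]; exists n; rewrite //= in_itv.
apply: bigcupT_measurable => n; rewrite -[X in measurable X]setTI.
exact: measurable_wealth.
Qed.

Lemma measurable_Ssum_gt c : measurable [set t | (c%:E < Ssum xi t)%E].
Proof.
rewrite (_ : [set t | _] = \bigcup_n ((fun t => Spsum xi t n) @^-1` `]c, +oo[)).
  apply: bigcupT_measurable => n; rewrite -[X in measurable X]setTI.
  exact: measurable_Spsum.
apply/seteqP; split=> t /=.
  by rewrite Ssum_gtP => -[n cn]; exists n => //=; rewrite in_itv /= cn.
by move=> [n _]; rewrite /= in_itv /= andbT => cn; apply/Ssum_gtP; exists n.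
Qed.

End measurability.

Section independent_signs.
Context d (T : measurableType d) (R : realType) (P : probability T R).
Context (xi : nat -> T -> R).
Hypothesis xi_meas : forall n, (0 < n)%N -> measurable_fun setT (xi n).
Hypothesis xi_indep : indep_seq P xi.

Definition cyl (A : nat -> set R) (n : nat) : set T :=
  \big[setI/setT]_(1 <= i < n.+1) (xi i @^-1` A i).

Lemma cylE A n : cyl A n = [set t | forall i, (0 < i <= n)%N -> A i (xi i t)].
Proof.
elim: n => [|n IH].
  rewrite /cyl big_geq //.
  by apply/seteqP; split=> // t _ [|i] //=; rewrite ltnNge.
rewrite /cyl big_nat_recr //= -/(cyl A n) IH; apply/seteqP; split=> t /=.
  move=> [tA tAn] i /andP[i0]; rewrite leq_eqVlt ltnS => /predU1P[->|i_n] //.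
  by apply: tA; rewrite i0.
by move=> tA; split=> [i /andP[i0 ni]|]; apply: tA; rewrite ?i0 //= leqW.
Qed.

Lemma cyl_with A n i B : (0 < i <= n)%N -> A i = setT ->
  cyl [eta A with i |-> B] n = cyl A n `&` xi i @^-1` B.
Proof.
move=> i0n Ai; rewrite !cylE; apply/seteqP; split=> t /=.
  move=> tA; split; last by have := tA i i0n; rewrite eqxx.
  by move=> j j0n; have := tA j j0n; case: eqP => [->|]; rewrite ?Ai.
by move=> [tA tB] j j0n; case: eqP => [->|_] //; exact: tA.
Qed.

Lemma measurable_xi_preimage i B :
  (0 < i)%N -> measurable B -> measurable (xi i @^-1` B).
Proof. by move=> i0 mB; rewrite -[X in measurable X]setTI; exact: xi_meas. Qed.

Lemma measurable_cyl A n : (forall i, measurable (A i)) -> measurable (cyl A n).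
Proof.
move=> mA; rewrite /cyl big_nat_cond; apply: bigsetI_measurable => i.
by rewrite andbT => /andP[i0 _]; exact: measurable_xi_preimage.
Qed.

Lemma measurable_with (A : nat -> set R) i (B : set R) :
  (forall j, measurable (A j)) -> measurable B ->
  forall j, measurable ([eta A with i |-> B] j).
Proof. by move=> mA mB j /=; case: eqP. Qed.

Lemma measure_cyl_with A n i B :
  (forall j, measurable (A j)) -> measurable B -> (0 < i <= n)%N -> A i = setT ->
  P (cyl [eta A with i |-> B] n) = (P (cyl A n) * P (xi i @^-1` B))%E.
Proof.
move=> mA mB i0n Ai; have mAB := measurable_with i mA mB.
have i_in : i \in index_iota 1 n.+1 by rewrite mem_index_iota ltnS.
rewrite /cyl !xi_indep // (bigD1_seq i) ?iota_uniq //=.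
rewrite [in RHS](bigD1_seq i) ?iota_uniq //=.
rewrite eqxx Ai preimage_setT probability_setT mul1e muleC; congr (_ * _)%E.
by apply: eq_bigr => j /negbTE ->.
Qed.

Lemma cyl_setT n : cyl (fun=> setT) n = setT.
Proof. by rewrite cylE; apply/seteqP; split. Qed.

Definition with_pattern (A : nat -> set R) (m : nat) : nat -> set R :=
  [eta ([eta ([eta A with m.+1 |-> [set 1]] : nat -> set R)
         with m.+2 |-> [set -1]] : nat -> set R) with m.+3 |-> [set -1]].

Lemma measurable_with_pattern A m : (forall j, measurable (A j)) ->
  forall j, measurable (with_pattern A m j).
Proof. by move=> mA; do 3?apply: measurable_with. Qed.

Variable p : R.
Hypothesis xi_plus : forall n, (0 < n)%N -> P (xi n @^-1` [set 1]) = p%:E.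
Hypothesis xi_minus :
  forall n, (0 < n)%N -> P (xi n @^-1` [set -1]) = (1 - p)%:E.
Local Notation q := (p * (1 - p) ^+ 2).

Section free_block.
Variables (A : nat -> set R) (n m : nat).
Hypotheses (mn : (m.+3 <= n)%N)
  (A1 : A m.+1 = setT) (A2 : A m.+2 = setT) (A3 : A m.+3 = setT).

Let m1n : (0 < m.+1 <= n)%N := ltnW (ltnW mn).
Let m2n : (0 < m.+2 <= n)%N := ltnW mn.
Let m3n : (0 < m.+3 <= n)%N := mn.

Lemma cyl_with_pattern : cyl (with_pattern A m) n = cyl A n `&` pattern xi m.
Proof.
rewrite /with_pattern cyl_with ?cyl_with ?cyl_with //= ?gtn_eqF //.
rewrite -!setIA; congr (_ `&` _).
by apply/seteqP; split=> t /=; [case=> ? []|case=> ? ? ?].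
Qed.

Lemma measure_cyl_pattern : (forall j, measurable (A j)) ->
  P (cyl (with_pattern A m) n) = (P (cyl A n) * q%:E)%E.
Proof.
move=> mA; rewrite /with_pattern.
rewrite measure_cyl_with ?measure_cyl_with ?measure_cyl_with //= ?gtn_eqF //;
  try by do ?apply: measurable_with.
by rewrite xi_plus // !xi_minus // -!muleA -!EFinM expr2 mulrA.
Qed.

End free_block.

Definition avoid (K N : nat) : set T :=
  \big[setI/setT]_(K <= k < K + N) ~` pattern xi (3 * k).

Lemma avoidS K N : avoid K N.+1 = avoid K N `&` ~` pattern xi (3 * (K + N)).
Proof. by rewrite /avoid addnS big_nat_recr //= leq_addr. Qed.

Lemma measurable_pattern m : measurable (pattern xi m).
Proof.
rewrite -[pattern _ _]setTI -(cyl_setT m.+3) -cyl_with_pattern //.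
exact: measurable_cyl (measurable_with_pattern _ (fun=> measurableT)).
Qed.

Lemma measurable_avoid K N : measurable (avoid K N).
Proof.
by apply: bigsetI_measurable => k _; exact/measurableC/measurable_pattern.
Qed.

(* Stated for every cylinder that is free on the blocks, so that the induction
   can split off the last block: its pattern is again a cylinder condition. *)
Lemma measure_cyl_avoid K N A n : (forall i, measurable (A i)) ->
  (forall i, (3 * K < i <= 3 * (K + N))%N -> A i = setT) ->
  (3 * (K + N) <= n)%N ->
  P (cyl A n `&` avoid K N) = (P (cyl A n) * ((1 - q) ^+ N)%:E)%E.
Proof.
elim: N A n => [|N IH] A n mA Afree KNn.
  by rewrite /avoid addn0 big_geq // setIT expr0 mule1.
set m := 3 * (K + N).
have mn : (m.+3 <= n)%N by lia.
have Afree_m i : (3 * K < i <= m)%N -> A i = setT by move=> ?; apply: Afree; lia.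
have [A1 A2 A3] : [/\ A m.+1 = setT, A m.+2 = setT & A m.+3 = setT].
  by split; apply: Afree; lia.
have mAm := measurable_with_pattern m mA.
have Amfree i : (3 * K < i <= m)%N -> with_pattern A m i = setT.
  by move=> Ki; rewrite /with_pattern /= !ltn_eqF ?Afree_m //; lia.
have mcyl := measurable_cyl n mA.
rewrite avoidS setIA -setDE measureD //; first last.
- rewrite -ge0_fin_numE // fin_num_measure //.
  exact/measurableI/measurable_avoid.
- exact: measurable_pattern.
- exact/measurableI/measurable_avoid.
rewrite setIAC -cyl_with_pattern //; transitivity
  (P (cyl A n) * ((1 - q) ^+ N)%:E - P (cyl A n) * q%:E * ((1 - q) ^+ N)%:E)%E.
  congr (_ - _)%E; first by apply: (IH A n) => //; lia.
  by rewrite -(measure_cyl_pattern mn A1 A2 A3 mA); apply: (IH _ n) => //; lia.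
rewrite -(fineK (fin_num_measure P _ mcyl)) -!EFinM -EFinB; congr EFin.
by rewrite [_ ^+ N.+1]exprSr; ring.
Qed.

Lemma measure_avoid K N : P (avoid K N) = ((1 - q) ^+ N)%:E.
Proof.
have := @measure_cyl_avoid K N (fun=> setT) (3 * (K + N)).
by rewrite cyl_setT setTI probability_setT mul1e; apply.
Qed.

Hypotheses (p_gt0 : 0 < p) (p_lt1 : p < 1).

Lemma ae_pattern_infinitely_often :
  \forall t \ae P, forall K, exists2 m, (K <= m)%N & pattern xi m t.
Proof.
apply: ae_foralln => K; exists (\bigcap_N avoid K N); split.
- exact/bigcapT_measurable/measurable_avoid.
- have q_gt0 : 0 < q by rewrite mulr_gt0 // exprn_gt0 // subr_gt0.
  have q_le1 : q <= 1.
    by rewrite mulr_ile1 ?exprn_ge0 ?exprn_ile1 ?subr_ge0 ?gerBl ?ltW.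
  have q_01 : `|1 - q| < 1 by rewrite ger0_norm; lra.
  apply/eqP; rewrite -measure_le0; apply: (lee0_geometric q_01) => N.
  rewrite -(measure_avoid K); apply: le_measure; rewrite ?inE.
  + exact/bigcapT_measurable/measurable_avoid.
  + exact: measurable_avoid.
  + by move=> t; apply.
- move=> t /= no_pattern N _; elim: N => [|N IH].
    by rewrite /avoid addn0 big_geq.
  rewrite avoidS; split=> // pat.
  by apply: no_pattern; exists (3 * (K + N)) => //; lia.
Qed.

Lemma ae_sign :
  \forall t \ae P, forall i, (0 < i)%N -> xi i t = 1 \/ xi i t = -1.
Proof.
apply: ae_foralln => -[|i]; first exact: aeW.
have mxi (B : set R) : measurable B -> measurable (xi i.+1 @^-1` B).
  exact: measurable_xi_preimage.
exists (~` (xi i.+1 @^-1` [set 1] `|` xi i.+1 @^-1` [set -1])); split.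
- by apply/measurableC/measurableU; exact: mxi.
- apply: eq_trans (probability_setC _ _) _.
    by apply: measurableU; exact: mxi.
  rewrite measureU /=;
    try by [apply: mxi|apply/seteqP; split=> t // [/= ->]; lra].
  by rewrite xi_plus // xi_minus // -EFinD addrC subrK subrr.
- by move=> t /= not_sign [t1|tm1]; apply: not_sign => _; [left|right].
Qed.

End independent_signs.

Theorem lemma2p2 (d : measure_display) (T : measurableType d) (R : realType)
  (P : probability T R) (xi : nat -> T -> R) (p x : R)
  (hp0 : 0 < p) (hp1 : p < 1) (hx : 2 < x)
  (hmeas : forall n, (1 <= n)%N -> measurable_fun setT (xi n))
  (hindep : indep_seq P xi)
  (hplus : forall n, (1 <= n)%N -> P (xi n @^-1` [set 1]) = p%:E)
  (hminus : forall n, (1 <= n)%N -> P (xi n @^-1` [set -1]) = (1 - p)%:E) :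
  P [set t | exists n : nat, wealth x xi n t <= 0] =
  P [set t | ((x - 2)%:E < Ssum xi t)%E].
Proof.
apply: measure_ae_eq; first exact: measurable_ruin.
  exact: measurable_Ssum_gt.
have ae_io := ae_pattern_infinitely_often hmeas hindep hplus hminus hp0 hp1.
apply: filterS2 (ae_sign hmeas hplus hminus) ae_io => t t_sign t_io.
exact: ruin_iff_Ssum_gt.
Qed.
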